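(* Let $I\subset S=K[x_1,\dots,x_t]$ be an $\mathfrak m$-primary monomial ideal with $x_i^{a_i}\in\mathscr G(I)$, $a_i\in\mathbb Z_{>0}$, for $i=1,\dots,t$. Then $v(I)\le \sum_{i=1}^t a_i - t$.
   Context: $K$ is a field, $S$ is standard graded and $\mathfrak m=\langle x_1,\dots,x_t\rangle$. For a proper graded ideal $I$, the $v$-number is $v(I)=\min\{k\ge 0 : \exists f\in S_k,\ \mathcal P\in\operatorname{Ass}(S/I) \text{ with } (I:f)=\mathcal P\}$. $\mathscr G(I)$ is the minimal monomial generating set of the monomial ideal $I$. *)

From HB Require Import structures.
From mathcomp Require Import all_boot all_order all_algebra.
From mathcomp Require Import mpoly.
Set Implicit Arguments. Unset Strict Implicit. Unset Printing Implicit Defensive.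
Import GRing.Theory.
Local Open Scope ring_scope.

Section Ideals.
Variables (K : fieldType) (t : nat).
Local Notation S := {mpoly K[t]}.

Definition gen_ideal (gs : seq S) : S -> Prop :=
  fun f => exists c : 'I_(size gs) -> S, f = \sum_(i < size gs) c i * gs`_i.

Definition is_ideal (J : S -> Prop) : Prop :=
  [/\ J 0, (forall f g, J f -> J g -> J (f + g)) & (forall f g, J f -> J (g * f))].

Definition prime_ideal (J : S -> Prop) : Prop :=
  [/\ is_ideal J, ~ J 1 & (forall f g, J (f * g) -> J f \/ J g)].

Definition colon (J : S -> Prop) (f : S) : S -> Prop := fun g => J (g * f).

Definition max_ideal : S -> Prop := gen_ideal [seq 'X_i | i <- enum 'I_t].

Definition monomial (u : S) : Prop := exists m : 'X_{1..t}, u = 'X_[m].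

Definition m_primary (J : S -> Prop) : Prop :=
  forall f, (exists e : nat, J (f ^+ e)) <-> max_ideal f.

(* u belongs to the minimal monomial generating set G(J) of the monomial
   ideal J: u is a monomial of J not strictly divisible by any other
   monomial of J. *)
Definition in_minGens (J : S -> Prop) (u : S) : Prop :=
  exists m : 'X_{1..t}, [/\ u = 'X_[m], J 'X_[m] &
    forall m' : 'X_{1..t}, J 'X_[m'] -> (forall i, (m' i <= m i)%N) -> m' = m].

Definition Ass (J : S -> Prop) (P : S -> Prop) : Prop :=
  prime_ideal P /\ exists g : S, forall h, P h <-> colon J g h.

(* property defining the set of which the v-number is the minimum *)
Definition v_cand (J : S -> Prop) (k : nat) : Prop :=
  exists f : S, f \is k.-homog /\
    exists P, Ass J P /\ forall h, colon J f h <-> P h.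

Definition is_v_number (J : S -> Prop) (v : nat) : Prop :=
  v_cand J v /\ forall k, v_cand J k -> (v <= k)%N.

End Ideals.

From HB Require Import structures.
From mathcomp Require Import all_boot all_order all_algebra.
From mathcomp Require Import mpoly.
From mathcomp Require Import zify ring.
From Stdlib Require Import Classical Wf_nat.
Set Implicit Arguments. Unset Strict Implicit. Unset Printing Implicit Defensive.
Import GRing.Theory.
Local Open Scope ring_scope.

(** Since [I] contains every [x_i^(a_i)], only finitely many monomials lie
    outside [I], all of them dividing [x_1^(a_1-1) ... x_t^(a_t-1)]; as [I] is
    proper, [1] is one of them.  A monomial [x^m] outside [I] of maximal degree
    is a socle monomial: [x_i x^m] lies in [I] for every [i].  Then the colon
    ideal [(I : x^m)] is the maximal ideal, which is prime, so it is associated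
    to [I] and [v(I) <= deg x^m <= sum_i (a_i - 1)]. *)

Lemma ex_minn_classic (P : nat -> Prop) k : P k ->
  exists2 n, P n & forall m, P m -> (n <= m)%N.
Proof.
move=> Pk; have [n [[Pn n_min] _]] := @dec_inh_nat_subset_has_unique_least_element P
  (fun n => classic (P n)) (ex_intro _ k Pk).
by exists n => // m /n_min /leP.
Qed.

Lemma ex_maxn_classic (P : nat -> Prop) b k : P k ->
  (forall n, P n -> (n <= b)%N) -> exists2 n, P n & forall m, P m -> (m <= n)%N.
Proof.
move=> Pk P_le_b.
have [|d [Pbd _] d_min] :=
  @ex_minn_classic (fun d => P (b - d)%N /\ (d <= b)%N) (b - k)%N.
  by split; [rewrite subKn ?P_le_b | exact: leq_subr].
exists (b - d)%N => // m Pm.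
have /d_min : P (b - (b - m))%N /\ (b - m <= b)%N.
  by split; [rewrite subKn ?P_le_b | exact: leq_subr].
by have := P_le_b _ Pm; lia.
Qed.

Section Ideals.
Variables (K : fieldType) (t : nat).
Local Notation S := {mpoly K[t]}.
Implicit Types (J : S -> Prop) (f g h p : S) (gs : seq S) (m : 'X_{1..t}).

Lemma gen_ideal_is_ideal gs : is_ideal (gen_ideal gs).
Proof.
split.
- by exists (fun=> 0); rewrite big1 // => i _; rewrite mul0r.
- move=> _ _ [c1 ->] [c2 ->]; exists (fun i => c1 i + c2 i).
  by rewrite -big_split; apply: eq_bigr => i _; rewrite mulrDl.
- move=> _ g [c ->]; exists (fun i => g * c i).
  by rewrite mulr_sumr; apply: eq_bigr => i _; rewrite mulrA.
Qed.

Lemma mem_gen_ideal gs g : g \in gs -> gen_ideal gs g.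
Proof.
move=> gs_g; have lt_g : (index g gs < size gs)%N by rewrite index_mem.
exists (fun j => (j == Ordinal lt_g)%:R).
rewrite (bigD1 (Ordinal lt_g)) //= eqxx mul1r nth_index // big1 ?addr0 //.
by move=> j /negbTE ->; rewrite mul0r.
Qed.

Lemma gen_ideal_min gs J : is_ideal J ->
  (forall g, g \in gs -> J g) -> forall f, gen_ideal gs f -> J f.
Proof.
move=> [J0 JD JM] J_gs _ [c ->].
by apply: (big_ind J) => // i _; apply/JM/J_gs/mem_nth.
Qed.

Definition origin : 'I_t -> K := fun=> 0.

Lemma meval_origin_max_ideal f : max_ideal f -> f.@[origin] = 0.
Proof.
apply: (gen_ideal_min (J := fun f => f.@[origin] = 0)).
- split; first exact: meval0.
  + by move=> p q p0 q0; rewrite mevalD p0 q0 addr0.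
  + by move=> p q p0; rewrite mevalM p0 mulr0.
- by move=> _ /mapP [i _ ->]; rewrite mevalXU.
Qed.

Lemma max_idealX i : max_ideal ('X_i : S).
Proof. by apply/mem_gen_ideal/map_f; rewrite mem_enum. Qed.

Lemma max_idealX_mnm m : m != 0%MM -> max_ideal ('X_[m] : S).
Proof.
move=> m_neq0; have [_ _ IM] := gen_ideal_is_ideal [seq 'X_i | i <- enum 'I_t].
have [i m_i] : exists i, (0 < m i)%N.
  apply/existsP; apply: contraR m_neq0 => /existsPn m0.
  by apply/eqP/mnmP => j; rewrite mnm0E; apply/eqP; rewrite -leqn0 leqNgt m0.
rewrite mpolyXE_id (bigD1 i) //= -(prednK m_i) exprS -mulrA mulrC.
exact/IM/max_idealX.
Qed.

Lemma max_ideal_subC_meval p : max_ideal (p - (p.@[origin])%:MP).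
Proof.
have [I0 ID IM] := gen_ideal_is_ideal [seq 'X_i | i <- enum 'I_t].
elim/mpolyind: p => [|c m p _ _ IHp]; first by rewrite meval0 subrr.
have -> : c *: 'X_[m] + p - ((c *: 'X_[m] + p).@[origin])%:MP =
   c%:MP * ('X_[m] - ('X_[m].@[origin])%:MP) + (p - (p.@[origin])%:MP).
  by rewrite mevalD mevalZ mpolyCD mpolyCM -mul_mpolyC; ring.
apply: ID IHp; apply: IM.
have [->|m_neq0] := eqVneq m 0%MM; first by rewrite mpolyX0 meval1 subrr.
have Xm_max := max_idealX_mnm m_neq0.
by rewrite meval_origin_max_ideal // subr0.
Qed.

Lemma max_idealP f : max_ideal f <-> f.@[origin] = 0.
Proof.
split=> [|f0]; first exact: meval_origin_max_ideal.
by have := max_ideal_subC_meval f; rewrite f0 subr0.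
Qed.

Lemma max_ideal_prime : prime_ideal (@max_ideal K t).
Proof.
split; first exact: gen_ideal_is_ideal.
- by rewrite max_idealP meval1; apply/eqP/oner_neq0.
- move=> f g; rewrite !max_idealP mevalM => /eqP.
  by rewrite mulf_eq0 => /orP[]/eqP; auto.
Qed.

Lemma m_primary_proper J : m_primary J -> ~ J 1.
Proof.
move=> J_prim J1; have /max_idealP : max_ideal (1 : S) by apply/J_prim; exists 1%N.
by rewrite meval1; apply/eqP/oner_neq0.
Qed.

Lemma colon_max_ideal J f : is_ideal J -> ~ J f ->
  (forall i, J ('X_i * f)) -> forall h, colon J f h <-> max_ideal h.
Proof.
move=> [J0 JD JM] Jf JXf.
have max_colon h : max_ideal h -> J (h * f).
  apply: (gen_ideal_min (J := fun h => J (h * f))) => [|_ /mapP [i _ ->] //].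
  split=> [|p q Jp Jq|p q Jp]; first by rewrite mul0r.
  - by rewrite mulrDl; apply: JD.
  - by rewrite -mulrA; apply: JM.
move=> h; split=> [Jhf|]; last exact: max_colon.
have [/max_idealP //|h0_neq0] := eqVneq h.@[origin] 0; case: Jf.
set c := h.@[origin] in h0_neq0.
have Jcf : J (c%:MP * f).
  have -> : c%:MP * f = h * f + (-1) * ((h - c%:MP) * f) by ring.
  by apply: JD => //; apply/JM/max_colon/max_ideal_subC_meval.
by rewrite -[f]mul1r -(mpolyC1 t K) -(mulVf h0_neq0) mpolyCM -mulrA; apply: JM.
Qed.

Lemma v_cand_of_socle J f k : is_ideal J -> f \is k.-homog -> ~ J f ->
  (forall i, J ('X_i * f)) -> v_cand J k.
Proof.
move=> J_ideal f_homog Jf JXf; exists f; split=> //.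
have colonE := colon_max_ideal J_ideal Jf JXf.
exists (@max_ideal K t); split=> [|h]; last by rewrite colonE.
by split; [exact: max_ideal_prime | exists f => h; rewrite colonE].
Qed.

Lemma mnm_lt_notin_ideal J m i n : is_ideal J ->
  J ('X_i ^+ n) -> ~ J 'X_[m] -> (m i < n)%N.
Proof.
move=> [_ _ JM] JXn; rewrite ltnNge; apply: contra_notN => le_n_mi.
pose r := [multinom (if j == i then (m j - n)%N else m j) | j < t].
have -> : m = (r + U_(i) *+ n)%MM.
  apply/mnmP => j; rewrite mnmDE mulmnE mnm1E mnmE.
  case: eqVneq => [->|_] /=; last by rewrite mul0n addn0.
  by rewrite mul1n subnK.
by rewrite mpolyXD -mpolyXn; apply: JM.
Qed.

Lemma exists_socle_monomial J (a : 'I_t -> nat) : is_ideal J ->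
  (forall i, J ('X_i ^+ a i)) -> ~ J 1 ->
  exists m, [/\ ~ J 'X_[m], forall i, J ('X_i * 'X_[m]) & forall i, (m i < a i)%N].
Proof.
move=> J_ideal JXa J1.
have lt_a m i : ~ J 'X_[m] -> (m i < a i)%N by apply: mnm_lt_notin_ideal.
have [||d [m [<- Jm]] d_max] :=
  @ex_maxn_classic (fun d => exists m, mdeg m = d /\ ~ J 'X_[m]) (\sum_i a i) 0.
- by exists 0%MM; rewrite mdeg0 mpolyX0.
- move=> _ [m [<- Jm]]; rewrite mdegE; apply: leq_sum => i _.
  exact/ltnW/lt_a.
exists m; split=> [//|i|i]; last exact: lt_a.
apply: NNPP => JXm; suff: ((mdeg m).+1 <= mdeg m)%N by rewrite ltnn.
by apply: d_max; exists (U_(i) + m)%MM; rewrite mdegD mdeg1 mpolyXD.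
Qed.

Lemma mdeg_le_sub_card m (a : 'I_t -> nat) :
  (forall i, m i < a i)%N -> (mdeg m <= \sum_i a i - t)%N.
Proof.
move=> lt_a; suff: (mdeg m + \sum_(i < t) 1 <= \sum_i a i)%N.
  by rewrite sum1_card card_ord; lia.
by rewrite mdegE -big_split; apply: leq_sum => i _; rewrite /= addn1 lt_a.
Qed.

End Ideals.

Theorem proposition4p3 (K : fieldType) (t : nat) (gens : seq {mpoly K[t]})
  (a : 'I_t -> nat) :
  (forall g, g \in gens -> monomial g) ->
  m_primary (gen_ideal gens) ->
  (forall i, (0 < a i)%N) ->
  (forall i, in_minGens (gen_ideal gens) ('X_i ^+ a i)) ->
  exists v : nat, is_v_number (gen_ideal gens) v /\
    (v <= (\sum_(i < t) a i) - t)%N.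
Proof.
move=> _ J_prim _ J_minGens; set J := gen_ideal gens.
have J_ideal : is_ideal J := gen_ideal_is_ideal gens.
have JXa i : J ('X_i ^+ a i) by have [n [-> JXn _]] := J_minGens i.
have [m [Jm JXm lt_a]] :=
  exists_socle_monomial J_ideal JXa (m_primary_proper J_prim).
have vm : v_cand J (mdeg m) by apply: v_cand_of_socle Jm JXm; rewrite ?dhomogX.
have [v vJ v_min] := ex_minn_classic vm.
exists v; split; first by split.
exact: leq_trans (v_min _ vm) (mdeg_le_sub_card lt_a).
Qed.
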